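(* Let $n\ge2$ and let $G=\{G_1,\ldots,G_t\}\subseteq\mathrm{H}(n,\mathbb{Q}(\mathrm{i}))$ be such that every $G_i$ is non-redundant. Suppose there exist $M_1,M_2,M_3,M_4\in G$ such that $[M_1,M_2]$ and $[M_3,M_4]$ do not have the same angle, i.e. both are nonzero and $[M_1,M_2]\notin\mathbb{R}\cdot[M_3,M_4]$. Then $\boldsymbol{I}_n\in\langle G\rangle$.
   Context: $\mathbb{Q}(\mathrm{i})=\{a+b\mathrm{i}\mid a,b\in\mathbb{Q}\}$. $\mathrm{H}(n,\mathbb{Q}(\mathrm{i}))$ is the set of $n\times n$ matrices $M=\begin{pmatrix}1&\boldsymbol{m}_1^T&m_3\\ \boldsymbol{0}&\boldsymbol{I}_{n-2}&\boldsymbol{m}_2\\ 0&\boldsymbol{0}^T&1\end{pmatrix}$ with $\boldsymbol{m}_1,\boldsymbol{m}_2\in\mathbb{Q}(\mathrm{i})^{n-2}$, $m_3\in\mathbb{Q}(\mathrm{i})$; write $\psi(M)=(\boldsymbol{m}_1,\boldsymbol{m}_2,m_3)$. For $\psi(M)=(\boldsymbol{a},\boldsymbol{b},c)$, $\psi(M')=(\boldsymbol{a}',\boldsymbol{b}',c')$, the commutator is the scalar $[M,M']=\boldsymbol{a}^T\boldsymbol{b}'-\boldsymbol{a}'^T\boldsymbol{b}\in\mathbb{Q}(\mathrm{i})$. Two commutators have the same angle if they are real multiples of each other's direction, i.e. $[M_1,M_2]=r\exp(\mathrm{i}\gamma)$ and $[M_3,M_4]=r'\exp(\mathrm{i}\gamma)$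 for some $r,r'\in\mathbb{R}$ and $\gamma\in[0,\pi)$; by convention a zero commutator has the same angle as every commutator. With $\psi(G_j)=(\boldsymbol{a}_j,\boldsymbol{b}_j,c_j)$, a generator $G_i$ is non-redundant if there exists $\boldsymbol{x}\in\mathbb{N}^t$ with $\boldsymbol{x}(i)\ge1$, $\sum_j\boldsymbol{x}(j)\boldsymbol{a}_j=\boldsymbol{0}$ and $\sum_j\boldsymbol{x}(j)\boldsymbol{b}_j=\boldsymbol{0}$ (equivalently, $G_i$ has a nonzero $i$-th component in some minimal solution of this homogeneous system). $\langle G\rangle$ is the semigroup of finite nonempty products of elements of $G$. *)

From mathcomp Require Import all_boot all_order all_algebra all_field.
Set Implicit Arguments. Unset Strict Implicit. Unset Printing Implicit Defensive.
Import Order.TTheory GRing.Theory Num.Theory.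
Local Open Scope ring_scope.

Definition in_Qi (z : algC) : bool := ('Re z \in Crat) && ('Im z \in Crat).

(* Matrices are n x n with n = m.+2 (so n >= 2); index 0 is ord0 and n-1 is ord_max.
   The "middle" indices 1..n-2 are the k with 0 < k < m.+1. *)
Definition mid_idx (m : nat) (k : 'I_m.+2) : bool := (0 < k)%N && (k < m.+1)%N.

Definition in_H (m : nat) (M : 'M[algC]_m.+2) : Prop :=
  (forall i j, in_Qi (M i j)) /\
  (forall i, M i i = 1) /\
  (forall i j : 'I_m.+2, i != j ->
     ~~ ((i < j)%N && ((i == ord0) || (j == ord_max))) -> M i j = 0).

(* psi(M) = (a, b, c): a k = M 0 k, b k = M k (n-1) for middle k, c = M 0 (n-1). *)
Definition comm (m : nat) (M M' : 'M[algC]_m.+2) : algC :=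
  \sum_(k : 'I_m.+2 | mid_idx k) (M ord0 k * M' k ord_max - M' ord0 k * M k ord_max).

Definition same_angle (z w : algC) : Prop :=
  z = 0 \/ w = 0 \/ exists r : algC, r \is Num.real /\ z = r * w.

Definition non_redundant (m t : nat) (G : 'I_t -> 'M[algC]_m.+2) (i : 'I_t) : Prop :=
  exists x : 'I_t -> nat, (1 <= x i)%N /\
    (forall k : 'I_m.+2, mid_idx k -> \sum_(j < t) (x j)%:R * G j ord0 k = 0) /\
    (forall k : 'I_m.+2, mid_idx k -> \sum_(j < t) (x j)%:R * G j k ord_max = 0).

Definition word_prod (m t : nat) (G : 'I_t -> 'M[algC]_m.+2) (s : seq 'I_t) : 'M[algC]_m.+2 :=
  foldr (fun i A => G i *m A) 1%:M s.

Definition in_semigroup (m t : nat) (G : 'I_t -> 'M[algC]_m.+2) (A : 'M[algC]_m.+2) : Prop :=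
  exists s : seq 'I_t, s <> [::] /\ word_prod G s = A.

From HB Require Import structures.
From mathcomp Require Import all_boot all_order all_algebra all_field.
From mathcomp Require Import ring zify.
Import Order.TTheory GRing.Theory Num.Theory.
Local Open Scope ring_scope.
Set Implicit Arguments. Unset Strict Implicit. Unset Printing Implicit Defensive.

(* In the coordinates psi(M) = (a, b, c), H(n) is a Heisenberg group:
   (a, b, c)(a', b', c') = (a + a', b + b', c + c' + a.b'), whose centre is
   a = b = 0, where only c adds up.  Non-redundancy yields a word through all
   generators whose a- and b-parts cancel; dropping one letter G_i from it gives
   R_i with G_i R_i central, of corner z_i.  Then G_i^K G_j^K R_i^K R_j^K is
   central with corner K (z_i + z_j) + K^2 [G_i, G_j], and swapping i and j
   flips the sign of the commutator term.  As [M_1, M_2] and [M_3, M_4] are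
   R-independent in Q(i), q (z_1 + z_2 + z_3 + z_4) = p [M_1, M_2] + p' [M_3, M_4]
   for integers q > 0, p, p'.  Raising the central elements for (1,2), (2,1),
   (3,4), (4,3) to the powers qK - p, qK + p, qK - p', qK + p', positive for K
   large, and multiplying gives corner 0, i.e. the identity. *)

Section Heisenberg.
Variables (R : comNzRingType) (m : nat).
Implicit Types (A B C P Q : 'M[R]_m.+2) (c d : R).

Definition is_heis A : Prop :=
  (forall i, A i i = 1) /\
  (forall i j, i != j -> i != ord0 -> j != ord_max -> A i j = 0).

(* a.b' for psi(A) = (a, b, c) and psi(B) = (a', b', c'). *)
Definition heis_dot A B : R := \sum_(k | mid_idx k) A ord0 k * B k ord_max.

Definition center_mx c : 'M[R]_m.+2 := 1 + c *: delta_mx ord0 ord_max.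

Lemma ord_max_neq0 : (ord_max : 'I_m.+2) != ord0.
Proof. by rewrite -val_eqE. Qed.

Lemma mid_idxE (k : 'I_m.+2) : mid_idx k = (k != ord0) && (k != ord_max).
Proof.
rewrite /mid_idx -!val_eqE /=; case: k => k /= lt_k.
by rewrite lt0n; congr (_ && _); rewrite ltn_neqAle -ltnS lt_k andbT.
Qed.

Lemma is_heis1 : is_heis 1.
Proof. by split=> [i|i j ij _ _]; rewrite mxE ?eqxx // (negbTE ij). Qed.

Lemma is_heisM A B : is_heis A -> is_heis B -> is_heis (A * B).
Proof.
move=> [A1 A0] [B1 B0]; split=> [i|i j ij i0 j_max]; rewrite -mulmxE mxE.
- rewrite (bigD1 i) //= A1 B1 mul1r big1 ?addr0 // => l li.
  have [i0 | i0] := eqVneq i ord0.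
    by subst i; rewrite B0 ?mulr0 // eq_sym ord_max_neq0.
  have [l_max | l_max] := eqVneq l ord_max; last by rewrite A0 ?mul0r // eq_sym.
  by subst l; rewrite B0 ?mulr0 ?ord_max_neq0 // eq_sym.
- rewrite big1 // => l _.
  have [-> | li] := eqVneq l i; first by rewrite B0 ?mulr0.
  have [-> | l_max] := eqVneq l ord_max; last by rewrite A0 ?mul0r // eq_sym.
  by rewrite B0 ?mulr0 ?ord_max_neq0 // eq_sym.
Qed.

Lemma is_heisX A n : is_heis A -> is_heis (A ^+ n).
Proof.
move=> hA; elim: n => [|n IH]; first by rewrite expr0; exact: is_heis1.
by rewrite exprS; exact: is_heisM.
Qed.

Lemma heis_mul_top A B k : is_heis A -> is_heis B -> mid_idx k ->
  (A * B) ord0 k = A ord0 k + B ord0 k.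
Proof.
move=> [A1 A0] [B1 B0]; rewrite mid_idxE => /andP[k0 k_max].
rewrite -mulmxE mxE (bigD1 ord0) //= (bigD1 k) //= A1 B1 mul1r mulr1 addrC.
by rewrite big1 ?addr0 // => l /andP[l0 lk]; rewrite B0 ?mulr0.
Qed.

Lemma heis_mul_right A B k : is_heis A -> is_heis B -> mid_idx k ->
  (A * B) k ord_max = A k ord_max + B k ord_max.
Proof.
move=> [A1 A0] [B1 B0]; rewrite mid_idxE => /andP[k0 k_max].
rewrite -mulmxE mxE (bigD1 k) //= (bigD1 ord_max) 1?eq_sym //= A1 B1 mul1r mulr1 addrC.
by rewrite big1 ?addr0 // => l /andP[lk l_max]; rewrite A0 ?mul0r // eq_sym.
Qed.

Lemma heis_mul_corner A B : is_heis A -> is_heis B ->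
  (A * B) ord0 ord_max = A ord0 ord_max + B ord0 ord_max + heis_dot A B.
Proof.
move=> [A1 A0] [B1 B0].
rewrite -mulmxE mxE (bigD1 ord0) //= (bigD1 ord_max) ?ord_max_neq0 //= A1 B1.
rewrite mul1r mulr1 addrA [_ + A _ _]addrC; congr (_ + _).
by apply: eq_bigl => l; rewrite mid_idxE.
Qed.

Lemma heis_eq A B : is_heis A -> is_heis B ->
  (forall k, mid_idx k -> A ord0 k = B ord0 k /\ A k ord_max = B k ord_max) ->
  A ord0 ord_max = B ord0 ord_max -> A = B.
Proof.
move=> [A1 A0] [B1 B0] AB corner_AB; apply/matrixP => i j.
have [<- | ij] := eqVneq i j; first by rewrite A1 B1.
have [i0 | i0] := eqVneq i ord0.
  subst i; have [-> // | j_max] := eqVneq j ord_max.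
  by case: (AB j) => [|-> //]; rewrite mid_idxE j_max andbT eq_sym.
have [j_max | j_max] := eqVneq j ord_max; last by rewrite A0 ?B0.
by subst j; case: (AB i) => [|_ ->]; rewrite // mid_idxE i0.
Qed.

Lemma heis_dotMl A B C : is_heis A -> is_heis B ->
  heis_dot (A * B) C = heis_dot A C + heis_dot B C.
Proof.
move=> hA hB; rewrite /heis_dot -big_split /=; apply: eq_bigr => k mid_k.
by rewrite heis_mul_top // mulrDl.
Qed.

Lemma heis_dotMr A B C : is_heis A -> is_heis B ->
  heis_dot C (A * B) = heis_dot C A + heis_dot C B.
Proof.
move=> hA hB; rewrite /heis_dot -big_split /=; apply: eq_bigr => k mid_k.
by rewrite heis_mul_right // mulrDr.
Qed.

Lemma heis_dot1l C : heis_dot 1 C = 0.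
Proof.
rewrite /heis_dot big1 // => k; rewrite mid_idxE => /andP[k0 _].
by rewrite mxE eq_sym (negbTE k0) mul0r.
Qed.

Lemma heis_dot1r C : heis_dot C 1 = 0.
Proof.
rewrite /heis_dot big1 // => k; rewrite mid_idxE => /andP[_ k_max].
by rewrite mxE (negbTE k_max) mulr0.
Qed.

Lemma heis_dotXl A C n : is_heis A -> heis_dot (A ^+ n) C = heis_dot A C *+ n.
Proof.
move=> hA; elim: n => [|n IH]; first by rewrite expr0 heis_dot1l.
by rewrite exprS heis_dotMl ?IH ?mulrS //; exact: is_heisX.
Qed.

Lemma heis_dotXr A C n : is_heis A -> heis_dot C (A ^+ n) = heis_dot C A *+ n.
Proof.
move=> hA; elim: n => [|n IH]; first by rewrite expr0 heis_dot1r.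
by rewrite exprS heis_dotMr ?IH ?mulrS //; exact: is_heisX.
Qed.

Lemma center_mxE c i j :
  center_mx c i j = (i == j)%:R + c * ((i == ord0) && (j == ord_max))%:R.
Proof. by rewrite !mxE. Qed.

Lemma is_heis_center c : is_heis (center_mx c).
Proof.
split=> [i|i j ij i0 _]; rewrite center_mxE ?(negbTE i0) ?(negbTE ij) ?mulr0 ?addr0 //.
rewrite eqxx; have [-> | _] := eqVneq i ord0; last by rewrite mulr0 addr0.
by rewrite eq_sym (negbTE ord_max_neq0) mulr0 addr0.
Qed.

Lemma center_mx_top c k : mid_idx k -> center_mx c ord0 k = 0.
Proof.
rewrite mid_idxE => /andP[k0 k_max].
by rewrite center_mxE eq_sym (negbTE k0) (negbTE k_max) andbF mulr0 addr0.
Qed.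

Lemma center_mx_right c k : mid_idx k -> center_mx c k ord_max = 0.
Proof.
rewrite mid_idxE => /andP[k0 k_max].
by rewrite center_mxE (negbTE k0) (negbTE k_max) mulr0 addr0.
Qed.

Lemma center_mx_corner c : center_mx c ord0 ord_max = c.
Proof. by rewrite center_mxE eq_sym (negbTE ord_max_neq0) !eqxx mulr1 add0r. Qed.

Lemma heis_dot_centerl c A : heis_dot (center_mx c) A = 0.
Proof. by rewrite /heis_dot big1 // => k /center_mx_top ->; rewrite mul0r. Qed.

Lemma heis_dot_centerr c A : heis_dot A (center_mx c) = 0.
Proof. by rewrite /heis_dot big1 // => k /center_mx_right ->; rewrite mulr0. Qed.

Lemma heis_centerP A : is_heis A ->
  (forall k, mid_idx k -> A ord0 k = 0 /\ A k ord_max = 0) ->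
  A = center_mx (A ord0 ord_max).
Proof.
move=> hA A0; apply: heis_eq => //; last by rewrite center_mx_corner.
  exact: is_heis_center.
by move=> k mid_k; rewrite center_mx_top // center_mx_right //; exact: A0.
Qed.

Lemma center_mxD c d : center_mx c * center_mx d = center_mx (c + d).
Proof.
have hc := is_heis_center; apply: heis_eq => //; first exact: is_heisM.
  move=> k mid_k.
  by rewrite heis_mul_top // heis_mul_right // !center_mx_top // !center_mx_right // addr0.
by rewrite heis_mul_corner // heis_dot_centerl !center_mx_corner addr0.
Qed.

Lemma center_mx0 : center_mx 0 = 1.
Proof. by rewrite /center_mx scale0r addr0. Qed.

Lemma center_mxX c n : center_mx c ^+ n = center_mx (c *+ n).
Proof.
elim: n => [|n IH]; first by rewrite expr0 mulr0n center_mx0.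
by rewrite exprS IH center_mxD mulrS.
Qed.

Lemma heis_commutator A B : is_heis A -> is_heis B ->
  A * B = B * A * center_mx (heis_dot A B - heis_dot B A).
Proof.
move=> hA hB; have hBA := is_heisM hB hA; have hc := is_heis_center.
apply: heis_eq; [exact: is_heisM | exact: is_heisM | |].
  move=> k mid_k; rewrite !heis_mul_top // !heis_mul_right //.
  by rewrite center_mx_top // center_mx_right // !addr0 [A _ _ + _]addrC [A k _ + _]addrC.
rewrite !heis_mul_corner // heis_dot_centerr center_mx_corner; ring.
Qed.

Lemma center_mxC c A : is_heis A -> center_mx c * A = A * center_mx c.
Proof.
move=> hA; rewrite heis_commutator ?heis_dot_centerl ?heis_dot_centerr //.
  by rewrite subrr center_mx0 mulr1.
exact: is_heis_center.
Qed.

Lemma center_exprM P Q c n : is_heis P -> is_heis Q ->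
  P * Q = center_mx c -> P ^+ n * Q ^+ n = center_mx (c *+ n).
Proof.
move=> hP hQ PQ; elim: n => [|n IH]; first by rewrite !expr0 mulr1 mulr0n center_mx0.
rewrite exprS exprSr mulrA -(mulrA P) IH -center_mxC // -mulrA PQ.
by rewrite center_mxD mulrSr.
Qed.

(* P' and Q' invert P and Q up to central factors, so only the commutator of
   P and Q survives. *)
Lemma center_cross P P' Q Q' c d :
  is_heis P -> is_heis P' -> is_heis Q -> is_heis Q' ->
  P * P' = center_mx c -> Q * Q' = center_mx d ->
  P * Q * P' * Q' = center_mx (c + d + (heis_dot P Q - heis_dot Q P)).
Proof.
move=> hP hP' hQ hQ' PP' QQ'.
have dQP' : heis_dot Q P' = - heis_dot Q P.
  by apply/eqP; rewrite -addr_eq0 addrC -heis_dotMr // PP' heis_dot_centerr.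
have dP'Q : heis_dot P' Q = - heis_dot P Q.
  by apply/eqP; rewrite -addr_eq0 addrC -heis_dotMl // PP' heis_dot_centerl.
rewrite -(mulrA P Q) (heis_commutator hQ hP') dQP' dP'Q !mulrA PP'.
rewrite -mulrA (center_mxC _ hQ') !mulrA -(mulrA (center_mx c)) QQ' !center_mxD.
by congr center_mx; ring.
Qed.

End Heisenberg.

Arguments center_mx {R m} c.

Lemma in_H_is_heis m (A : 'M[algC]_m.+2) : in_H A -> is_heis A.
Proof.
move=> [_ [A1 A0]]; split=> // i j ij i0 j_max.
by apply: A0 => //; rewrite (negbTE i0) (negbTE j_max) andbF.
Qed.

Lemma comm_heis_dot m (A B : 'M[algC]_m.+2) : comm A B = heis_dot A B - heis_dot B A.
Proof. by rewrite /comm /heis_dot sumrB. Qed.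

Lemma comm_antisym m (A B : 'M[algC]_m.+2) : comm B A = - comm A B.
Proof. by rewrite !comm_heis_dot opprB. Qed.

Lemma in_Qi_subring : subring_closed in_Qi.
Proof.
have QiE x : (x \in in_Qi) = ('Re x \in Crat) && ('Im x \in Crat) by [].
have real1 : (1 : algC) \is Num.real by rewrite realE ler01.
split=> [|x y|x y]; rewrite !QiE.
- by rewrite (Creal_ReP _ real1) (Creal_ImP _ real1) rpred1 rpred0.
- by move=> /andP[? ?] /andP[? ?]; rewrite !raddfB !rpredB.
- by move=> /andP[? ?] /andP[? ?]; rewrite ReM ImM !(rpredB, rpredD, rpredM).
Qed.

HB.instance Definition _ := GRing.isSubringClosed.Build algC in_Qi in_Qi_subring.

Lemma not_same_angle_det z w : ~ same_angle z w -> 'Re z * 'Im w - 'Re w * 'Im z != 0.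
Proof.
move=> not_same; apply/eqP => det0; apply: not_same; right.
have [-> | w0] := eqVneq w 0; [by left | right].
exists (z / w); split; last by rewrite divfK.
by apply/Creal_ImP; rewrite Im_div -opprB det0 oppr0 mul0r.
Qed.

Lemma Qi_int_span z w v : in_Qi z -> in_Qi w -> in_Qi v -> ~ same_angle z w ->
  exists q p p' : int, 0 < q /\ q%:~R * v = p%:~R * z + p'%:~R * w.
Proof.
move=> /andP[Qxz Qyz] /andP[Qxw Qyw] /andP[Qxv Qyv] /not_same_angle_det D_nz.
pose D := 'Re z * 'Im w - 'Re w * 'Im z.
pose a := ('Re v * 'Im w - 'Re w * 'Im v) / D.
pose b := ('Re z * 'Im v - 'Re v * 'Im z) / D.
have v_ab : v = a * z + b * w.
  by rewrite [v]Crect [z]Crect [w]Crect /a /b /D; field.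
have [ra ea] : exists ra, a = ratr ra by apply/CratP; rewrite !(rpred_div, rpredB, rpredM).
have [rb eb] : exists rb, b = ratr rb by apply/CratP; rewrite !(rpred_div, rpredB, rpredM).
have ratrE r : ratr r * (denq r)%:~R = (numq r)%:~R :> algC.
  by rewrite -[(numq _)%:~R]ratr_int numqE rmorphM /= ratr_int.
exists (denq ra * denq rb), (numq ra * denq rb), (numq rb * denq ra).
split; first by rewrite mulr_gt0 ?denq_gt0.
by rewrite v_ab ea eb !intrM -!ratrE; ring.
Qed.

Lemma pos_int_nat (R : pzRingType) (a : int) :
  0 < a -> exists2 n : nat, (0 < n)%N & a%:~R = n%:R :> R.
Proof. by case: a => // n n_pos; exists n. Qed.

Section Words.
Variables (m t : nat) (G : 'I_t -> 'M[algC]_m.+2).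
Implicit Types (A B : 'M[algC]_m.+2) (s : seq 'I_t).

Definition in_monoid A : Prop := exists s, word_prod G s = A.

Lemma word_prod_cons i s : word_prod G (i :: s) = G i * word_prod G s.
Proof. by []. Qed.

Lemma word_prod_cat s1 s2 :
  word_prod G (s1 ++ s2) = word_prod G s1 * word_prod G s2.
Proof. by elim: s1 => [|i s IH]; rewrite ?mul1r //= IH mulmxE mulrA. Qed.

Lemma in_monoid_semigroup A : in_semigroup G A -> in_monoid A.
Proof. by move=> [s [_ <-]]; exists s. Qed.

Lemma in_monoidX A n : in_monoid A -> in_monoid (A ^+ n).
Proof.
move=> [s <-]; elim: n => [|n [s' IH]]; first by exists [::].
by exists (s ++ s'); rewrite word_prod_cat IH exprS.
Qed.

Lemma in_semigroupMr A B : in_semigroup G A -> in_monoid B -> in_semigroup G (A * B).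
Proof.
move=> [s [s_nil <-]] [s' <-]; exists (s ++ s'); rewrite word_prod_cat.
by split=> //; case: s s_nil.
Qed.

Lemma in_semigroupX A n : (0 < n)%N -> in_semigroup G A -> in_semigroup G (A ^+ n).
Proof.
case: n => // n _ hA; rewrite exprS.
by apply: in_semigroupMr => //; apply/in_monoidX/in_monoid_semigroup.
Qed.

Lemma in_semigroup_gen i : in_semigroup G (G i).
Proof. by exists [:: i]; rewrite /= mulmx1. Qed.

Lemma in_semigroup_center_balance w d (N r : int) : 0 < N - r -> 0 < N + r ->
  in_semigroup G (center_mx (w + d)) -> in_semigroup G (center_mx (w - d)) ->
  in_semigroup G (center_mx ((w * N%:~R - d * r%:~R) *+ 2)).
Proof.
move=> /(pos_int_nat algC)[n n_pos en] /(pos_int_nat algC)[n' _ en'] Y Y'.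
have -> : (w * N%:~R - d * r%:~R) *+ 2 = (w + d) *+ n + (w - d) *+ n'.
  by rewrite -(mulr_natr (w + d)) -(mulr_natr (w - d)) -en -en'; ring.
rewrite -center_mxD -!center_mxX.
exact: in_semigroupMr (in_semigroupX n_pos Y) (in_monoidX n' (in_monoid_semigroup Y')).
Qed.

Lemma in_semigroup_center0 c :
  in_semigroup G (center_mx c) -> c = 0 -> in_semigroup G 1%:M.
Proof. by move=> + c0; rewrite c0 center_mx0 idmxE. Qed.

Lemma word_prod_Qi s a b :
  (forall i a b, G i a b \in in_Qi) -> word_prod G s a b \in in_Qi.
Proof.
move=> QiG; elim: s a b => [|i s IH] a b; first by rewrite mxE rpred_nat.
by rewrite word_prod_cons -mulmxE mxE rpred_sum // => l _; rewrite rpredM.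
Qed.

Hypothesis heisG : forall i, is_heis (G i).

Lemma is_heis_word s : is_heis (word_prod G s).
Proof. by elim: s => [|i s IH]; [exact: is_heis1 | exact: is_heisM]. Qed.

Lemma word_prod_top s k :
  mid_idx k -> word_prod G s ord0 k = \sum_(j <- s) G j ord0 k.
Proof.
move=> mid_k; elim: s => [|i s IH].
  by rewrite big_nil /= idmxE -(center_mx0 _ m) center_mx_top.
by rewrite big_cons word_prod_cons heis_mul_top ?IH //; exact: is_heis_word.
Qed.

Lemma word_prod_right s k :
  mid_idx k -> word_prod G s k ord_max = \sum_(j <- s) G j k ord_max.
Proof.
move=> mid_k; elim: s => [|i s IH].
  by rewrite big_nil /= idmxE -(center_mx0 _ m) center_mx_right.
by rewrite big_cons word_prod_cons heis_mul_right ?IH //; exact: is_heis_word.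
Qed.

End Words.

Definition mult_word t (x : 'I_t -> nat) : seq 'I_t :=
  flatten [seq nseq (x j) j | j <- index_enum 'I_t].

Lemma big_mult_word (V : nmodType) t (x : 'I_t -> nat) (f : 'I_t -> V) :
  \sum_(j <- mult_word x) f j = \sum_j f j *+ x j.
Proof.
rewrite big_flatten big_map; apply: eq_bigr => j _.
by rewrite big_nseq iter_addr_0.
Qed.

Lemma mem_mult_word t (x : 'I_t -> nat) j : (j \in mult_word x) = (0 < x j)%N.
Proof.
apply/flatten_mapP/idP => [[l _] | x_pos]; first by rewrite mem_nseq => /andP[+ /eqP ->].
by exists j; rewrite ?mem_index_enum // mem_nseq x_pos eqxx.
Qed.

Lemma exists_balanced_word m t (G : 'I_t -> 'M[algC]_m.+2) :
  (forall i, non_redundant G i) ->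
  exists2 s : seq 'I_t, forall i, i \in s &
    forall k, mid_idx k -> \sum_(j <- s) G j ord0 k = 0 /\ \sum_(j <- s) G j k ord_max = 0.
Proof.
move=> /fin_all_exists[x hx]; exists (flatten [seq mult_word (x i) | i <- index_enum 'I_t]).
  move=> i; apply/flatten_mapP; exists i; rewrite ?mem_index_enum // mem_mult_word.
  by case: (hx i).
move=> k mid_k; rewrite !big_flatten !big_map.
split; apply: big1 => i _; have [_ [top right]] := hx i; rewrite big_mult_word.
- by rewrite -[RHS](top k mid_k); apply: eq_bigr => j _; rewrite mulr_natl.
- by rewrite -[RHS](right k mid_k); apply: eq_bigr => j _; rewrite mulr_natl.
Qed.

Section Generators.
Variables (m t : nat) (G : 'I_t -> 'M[algC]_m.+2).
Hypothesis G_H : forall i, in_H (G i).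

Lemma gen_Qi i a b : G i a b \in in_Qi.
Proof. by have [QiG _] := G_H i; exact: QiG. Qed.

Lemma comm_gen_Qi i j : comm (G i) (G j) \in in_Qi.
Proof. by rewrite rpred_sum // => k _; rewrite rpredB ?rpredM ?gen_Qi. Qed.

Lemma exists_central_products : (forall i, non_redundant G i) ->
  exists2 z : 'I_t -> algC, forall i, z i \in in_Qi &
    forall i j n, (0 < n)%N -> exists2 Y, in_semigroup G Y &
      Y = center_mx ((z i + z j) *+ n + comm (G i) (G j) *+ (n * n)).
Proof.
move=> nr; have heisG i := in_H_is_heis (G_H i).
have [s cover balanced] := exists_balanced_word nr.
pose R i := word_prod G (rem i s).
have heisR i : is_heis (R i) by exact: is_heis_word.
have GR i : G i * R i = center_mx ((G i * R i) ord0 ord_max).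
  rewrite -word_prod_cons; apply: heis_centerP; first exact: is_heis_word.
  move=> k mid_k; rewrite word_prod_top // word_prod_right //.
  by rewrite -!(perm_big _ (perm_to_rem (cover i))); exact: balanced.
exists (fun i => (G i * R i) ord0 ord_max).
  by move=> i; rewrite -word_prod_cons word_prod_Qi // => l a b; exact: gen_Qi.
move=> i j n n_pos; exists (G i ^+ n * G j ^+ n * R i ^+ n * R j ^+ n).
  have monoid_R l : in_monoid G (R l ^+ n) by apply: in_monoidX; exists (rem l s).
  apply: in_semigroupMr (monoid_R j); apply: in_semigroupMr (monoid_R i).
  apply: in_semigroupMr; first exact: in_semigroupX (in_semigroup_gen G i).
  exact/in_monoidX/in_monoid_semigroup/in_semigroup_gen.
have GRn l := center_exprM n (heisG l) (heisR l) (GR l).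
have heisX (A : 'M[algC]_m.+2) : is_heis A -> is_heis (A ^+ n) by exact: is_heisX.
rewrite (center_cross (heisX _ (heisG i)) (heisX _ (heisR i)) (heisX _ (heisG j))
  (heisX _ (heisR j)) (GRn i) (GRn j)).
rewrite heis_dotXl ?heis_dotXr ?heisX // heis_dotXl ?heis_dotXr // comm_heis_dot.
by rewrite -!mulrnA mulrnDl mulrnBl addrA.
Qed.

Lemma exists_central_balances : (forall i, non_redundant G i) ->
  exists2 z : 'I_t -> algC, forall i, z i \in in_Qi &
    forall i j (K : nat) (N r : int), (0 < K)%N -> 0 < N - r -> 0 < N + r ->
      in_semigroup G (center_mx
        (((z i + z j) *+ K * N%:~R - comm (G i) (G j) *+ (K * K) * r%:~R) *+ 2)).
Proof.
move=> /exists_central_products[z Qz central]; exists z => // i j K N r K_pos.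
have [Y Y_sg eY] := central i j K K_pos; have [Y' Y'_sg eY'] := central j i K K_pos.
move=> pos_Nr pos_Nr'; apply: in_semigroup_center_balance => //; first by rewrite -eY.
by rewrite (addrC (z i)) -mulNrn -comm_antisym -eY'.
Qed.

End Generators.

Theorem lemma5 (m t : nat) (G : 'I_t -> 'M[algC]_m.+2) :
  (forall i, in_H (G i)) ->
  (forall i, non_redundant G i) ->
  (exists i1 i2 i3 i4 : 'I_t,
     ~ same_angle (comm (G i1) (G i2)) (comm (G i3) (G i4))) ->
  in_semigroup G 1%:M.
Proof.
move=> G_H nr [i1 [i2 [i3 [i4 not_same]]]].
have [z Qz balance] := exists_central_balances G_H nr.
set v := z i1 + z i2 + (z i3 + z i4).
have Qv : v \in in_Qi by rewrite !rpredD.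
have [q [p [p' [q_pos span]]]] :=
  Qi_int_span (comm_gen_Qi G_H i1 i2) (comm_gen_Qi G_H i3 i4) Qv not_same.
pose K := (`|p| + `|p'|).+1; pose N := q * K%:Z.
have [pos1 pos2 pos3 pos4] : [/\ 0 < N - p, 0 < N + p, 0 < N - p' & 0 < N + p'].
  by rewrite /N /K; split; nia.
have := in_semigroupMr (balance i1 i2 K N p isT pos1 pos2)
  (in_monoid_semigroup (balance i3 i4 K N p' isT pos3 pos4)).
rewrite center_mxD => /in_semigroup_center0; apply.
transitivity ((q%:~R * v - (p%:~R * comm (G i1) (G i2) + p'%:~R * comm (G i3) (G i4)))
  * (K%:R ^+ 2 *+ 2)); last by rewrite span subrr mul0r.
by rewrite /v /N; ring.
Qed.
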